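(* For all well-typed terms $\Gamma\vdash t:A$ and $\Gamma\vdash u:A$ of $\lambda^{SR}$: $\Gamma\vdash t\equiv u:A$ holds in $\lambda^{SR}$ if and only if $[\![t]\!]=[\![u]\!]:[\![\Gamma]\!]\to[\![A]\!]$ in every categorical model of $\lambda^{SR}$ (every cartesian closed category with a strong pointed endofunctor, for every interpretation of the base type).
   Context: Types: $A,B ::= \iota \mid 1 \mid A\times B \mid A\to B \mid \Diamond A$, where $\iota$ is a base type. A context $\Gamma$ is a list $x_1:A_1,\dots,x_n:A_n$ of distinct variables. Terms of the simply typed part: variables, $()$, $\langle t,u\rangle$, $\mathsf{fst}\,t$, $\mathsf{snd}\,t$, $\lambda x.t$, $t\,u$, with the standard typing rules. The calculus $\lambda^{SR}$ adds: (letmap) if $\Gamma\vdash t:\Diamond A$ and $\Gamma,x:A\vdash u:B$ then $\Gamma\vdash \mathsf{letmap}\ x=t\ \mathsf{in}\ u:\Diamond B$; (ret) if $\Gamma\vdash t:A$ then $\Gamma\vdash\mathsf{ret}\,t:\Diamond A$. Its equational theory $\equiv$ is the least congruence on well-typed terms containing the simply typed $\beta\eta$-laws ($t\equiv()$ for $t:1$; $t\equiv\langle\mathsf{fst}\,t,\mathsf{snd}\,t\rangle$; $\mathsf{fst}\langle t,u\rangle\equiv t$; $\mathsf{snd}\langle t,u\rangle\equiv u$; $t\equiv\lambda x.\,t\,x$ with $x$ fresh; $(\lambda x.t)\,u\equiv t[u/x]$) and: $t\equiv\mathsf{letmap}\ x=t\ \mathsf{in}\ x$; $\mathsf{letmap}\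 y=(\mathsf{letmap}\ x=t\ \mathsf{in}\ u)\ \mathsf{in}\ u'\equiv\mathsf{letmap}\ x=t\ \mathsf{in}\ u'[u/y]$; $\mathsf{letmap}\ x=\mathsf{ret}\,t\ \mathsf{in}\ u\equiv\mathsf{ret}(u[t/x])$ (terms implicitly weakened where needed; $[\cdot/\cdot]$ is capture-avoiding substitution). A categorical model of $\lambda^{SR}$ is a cartesian closed category $\mathcal C$ with an endofunctor $D$, a strength $\mathrm{st}_{X,Y}:X\times DY\to D(X\times Y)$ (natural, with $D\pi_2\circ\mathrm{st}_{1,X}=\pi_2$ and $D\alpha\circ\mathrm{st}_{X\times Y,Z}=\mathrm{st}_{X,Y\times Z}\circ(\mathrm{id}\times\mathrm{st}_{Y,Z})\circ\alpha$), and a natural transformation $\eta:\mathrm{Id}\Rightarrow D$ that is strong: $\mathrm{st}_{X,Y}\circ(\mathrm{id}_X\times\eta_Y)=\eta_{X\times Y}$. Given an object interpreting $\iota$, types/contexts/simply typed terms are interpreted in the standard cartesian closed way with $[\![\Diamond A]\!]=D[\![A]\!]$, $[\![\mathsf{letmap}\ x=t\ \mathsf{in}\ u]\!]=D[\![u]\!]\circ\mathrm{st}\circ\langle\mathrm{id},[\![t]\!]\rangle$, and $[\![\mathsf{ret}\,t]\!]=\eta\circ[\![t]\!]$. *)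

From Stdlib Require Import List.
Import ListNotations.

Inductive ty : Type :=
| tyBase : ty
| tyUnit : ty
| tyProd : ty -> ty -> ty
| tyArr  : ty -> ty -> ty
| tyDia  : ty -> ty.

(* Contexts: lists of types; the head is the most recently bound variable,
   i.e. the context  x1:A1, ..., xn:An  is the list [An; ...; A1]. *)
Definition ctx := list ty.

Inductive var : ctx -> ty -> Type :=
| Vz : forall G A, var (A :: G) A
| Vs : forall G A B, var G A -> var (B :: G) A.
Arguments Vz {G A}.
Arguments Vs {G A B} _.

Inductive tm (G : ctx) : ty -> Type :=
| tvar : forall A, var G A -> tm G A
| tunit : tm G tyUnit
| tpair : forall A B, tm G A -> tm G B -> tm G (tyProd A B)
| tfst : forall A B, tm G (tyProd A B) -> tm G A
| tsnd : forall A B, tm G (tyProd A B) -> tm G B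
| tlam : forall A B, tm (A :: G) B -> tm G (tyArr A B)
| tapp : forall A B, tm G (tyArr A B) -> tm G A -> tm G B
| tletmap : forall A B, tm G (tyDia A) -> tm (A :: G) B -> tm G (tyDia B)
| tret : forall A, tm G A -> tm G (tyDia A).
Arguments tvar {G A} _.
Arguments tunit {G}.
Arguments tpair {G A B} _ _.
Arguments tfst {G A B} _.
Arguments tsnd {G A B} _.
Arguments tlam {G A B} _.
Arguments tapp {G A B} _ _.
Arguments tletmap {G A B} _ _.
Arguments tret {G A} _.

Definition ren (G G' : ctx) := forall A, var G A -> var G' A.
Definition sub (G G' : ctx) := forall A, var G A -> tm G' A.

Definition rcons {G G' A} (x : var G' A) (r : ren G G') : ren (A :: G) G' :=
  fun B v =>
    match v in var L B0
      return (match L with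
              | nil => unit
              | A0 :: G0 => var G' A0 -> (forall X, var G0 X -> var G' X) -> var G' B0
              end) with
    | Vz => fun x _ => x
    | Vs w => fun _ r => r _ w
    end x r.

Definition scons {G G' A} (u : tm G' A) (s : sub G G') : sub (A :: G) G' :=
  fun B v =>
    match v in var L B0
      return (match L with
              | nil => unit
              | A0 :: G0 => tm G' A0 -> (forall X, var G0 X -> tm G' X) -> tm G' B0
              end) with
    | Vz => fun u _ => u
    | Vs w => fun _ s => s _ w
    end u s.

Definition lift_ren {G G' A} (r : ren G G') : ren (A :: G) (A :: G') :=
  rcons Vz (fun B v => Vs (r B v)).

Fixpoint rename {G G' A} (r : ren G G') (t : tm G A) : tm G' A :=
  match t in tm _ A return tm G' A with
  | tvar x => tvar (r _ x)
  | tunit => tunit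
  | tpair a b => tpair (rename r a) (rename r b)
  | tfst a => tfst (rename r a)
  | tsnd a => tsnd (rename r a)
  | tlam b => tlam (rename (lift_ren r) b)
  | tapp f a => tapp (rename r f) (rename r a)
  | tletmap a b => tletmap (rename r a) (rename (lift_ren r) b)
  | tret a => tret (rename r a)
  end.

Definition wk {G A B} (t : tm G A) : tm (B :: G) A :=
  rename (fun C v => Vs v) t.

Definition lift_sub {G G' A} (s : sub G G') : sub (A :: G) (A :: G') :=
  scons (tvar Vz) (fun B v => wk (s B v)).

Fixpoint subst {G G' A} (s : sub G G') (t : tm G A) : tm G' A :=
  match t in tm _ A return tm G' A with
  | tvar x => s _ x
  | tunit => tunit
  | tpair a b => tpair (subst s a) (subst s b)
  | tfst a => tfst (subst s a)
  | tsnd a => tsnd (subst s a)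
  | tlam b => tlam (subst (lift_sub s) b)
  | tapp f a => tapp (subst s f) (subst s a)
  | tletmap a b => tletmap (subst s a) (subst (lift_sub s) b)
  | tret a => tret (subst s a)
  end.

Definition ids {G} : sub G G := fun A x => tvar x.

Definition subst1 {G A B} (t : tm (A :: G) B) (u : tm G A) : tm G B :=
  subst (scons u ids) t.

(* u'[u/y] where u' : (y:B)::G |- _ and u : (x:A)::G |- B, result in (x:A)::G
   (u' implicitly weakened by x) *)
Definition subst1_wk {G A B C} (u' : tm (B :: G) C) (u : tm (A :: G) B)
  : tm (A :: G) C :=
  subst (scons u (fun X v => tvar (Vs v))) u'.

Inductive teq : forall G A, tm G A -> tm G A -> Prop :=
| eq_refl_ : forall G A (t : tm G A), teq _ _ t t
| eq_sym_ : forall G A (t u : tm G A), teq _ _ t u -> teq _ _ u t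
| eq_trans_ : forall G A (t u v : tm G A), teq _ _ t u -> teq _ _ u v -> teq _ _ t v
| eq_pair : forall G A B (t t' : tm G A) (u u' : tm G B),
    teq _ _ t t' -> teq _ _ u u' -> teq _ _ (tpair t u) (tpair t' u')
| eq_fst : forall G A B (t t' : tm G (tyProd A B)), teq _ _ t t' -> teq _ _ (tfst t) (tfst t')
| eq_snd : forall G A B (t t' : tm G (tyProd A B)), teq _ _ t t' -> teq _ _ (tsnd t) (tsnd t')
| eq_lam : forall G A B (t t' : tm (A :: G) B), teq _ _ t t' -> teq _ _ (tlam t) (tlam t')
| eq_app : forall G A B (t t' : tm G (tyArr A B)) (u u' : tm G A),
    teq _ _ t t' -> teq _ _ u u' -> teq _ _ (tapp t u) (tapp t' u')
| eq_letmap : forall G A B (t t' : tm G (tyDia A)) (u u' : tm (A :: G) B),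
    teq _ _ t t' -> teq _ _ u u' -> teq _ _ (tletmap t u) (tletmap t' u')
| eq_ret : forall G A (t t' : tm G A), teq _ _ t t' -> teq _ _ (tret t) (tret t')
| eq_unit_eta : forall G (t : tm G tyUnit), teq _ _ t tunit
| eq_prod_eta : forall G A B (t : tm G (tyProd A B)), teq _ _ t (tpair (tfst t) (tsnd t))
| eq_fst_beta : forall G A B (t : tm G A) (u : tm G B), teq _ _ (tfst (tpair t u)) t
| eq_snd_beta : forall G A B (t : tm G A) (u : tm G B), teq _ _ (tsnd (tpair t u)) u
| eq_arr_eta : forall G A B (t : tm G (tyArr A B)),
    teq _ _ t (tlam (tapp (wk t) (tvar Vz)))
| eq_arr_beta : forall G A B (t : tm (A :: G) B) (u : tm G A),
    teq _ _ (tapp (tlam t) u) (subst1 t u)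
| eq_letmap_id : forall G A (t : tm G (tyDia A)), teq _ _ t (tletmap t (tvar Vz))
| eq_letmap_assoc : forall G A B C (t : tm G (tyDia A)) (u : tm (A :: G) B)
    (u' : tm (B :: G) C),
    teq _ _ (tletmap (tletmap t u) u') (tletmap t (subst1_wk u' u))
| eq_letmap_ret : forall G A B (t : tm G A) (u : tm (A :: G) B),
    teq _ _ (tletmap (tret t) u) (tret (subst1 u t)).
Arguments teq {G A} _ _.

Record CCC : Type := {
  obj : Type;
  hom : obj -> obj -> Type;
  idm : forall X, hom X X;
  comp : forall {X Y Z}, hom Y Z -> hom X Y -> hom X Z;
  comp_assoc : forall X Y Z W (f : hom X Y) (g : hom Y Z) (h : hom Z W),
      comp h (comp g f) = comp (comp h g) f;
  comp_id_l : forall X Y (f : hom X Y), comp (idm Y) f = f;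
  comp_id_r : forall X Y (f : hom X Y), comp f (idm X) = f;
  one : obj;
  bang : forall X, hom X one;
  bang_unique : forall X (f : hom X one), f = bang X;
  prod : obj -> obj -> obj;
  pi1 : forall X Y, hom (prod X Y) X;
  pi2 : forall X Y, hom (prod X Y) Y;
  pairing : forall {Z X Y}, hom Z X -> hom Z Y -> hom Z (prod X Y);
  pi1_pairing : forall Z X Y (f : hom Z X) (g : hom Z Y), comp (pi1 X Y) (pairing f g) = f;
  pi2_pairing : forall Z X Y (f : hom Z X) (g : hom Z Y), comp (pi2 X Y) (pairing f g) = g;
  pairing_unique : forall Z X Y (h : hom Z (prod X Y)),
      h = pairing (comp (pi1 X Y) h) (comp (pi2 X Y) h);
  (* exponentials: expo X Y = Y^X *)
  expo : obj -> obj -> obj;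
  ev : forall X Y, hom (prod (expo X Y) X) Y;
  curry : forall {Z X Y}, hom (prod Z X) Y -> hom Z (expo X Y);
  ev_curry : forall Z X Y (f : hom (prod Z X) Y),
      comp (ev X Y) (pairing (comp (curry f) (pi1 Z X)) (pi2 Z X)) = f;
  curry_unique : forall Z X Y (h : hom Z (expo X Y)),
      h = curry (comp (ev X Y) (pairing (comp h (pi1 Z X)) (pi2 Z X)))
}.
Arguments idm {c} X.
Arguments comp {c X Y Z} _ _.
Arguments one {c}.
Arguments bang {c} X.
Arguments prod {c} _ _.
Arguments pi1 {c} X Y.
Arguments pi2 {c} X Y.
Arguments pairing {c Z X Y} _ _.
Arguments expo {c} _ _.
Arguments ev {c} X Y.
Arguments curry {c Z X Y} _.

Definition prodmap {C : CCC} {X Y X' Y'} (f : hom C X X') (g : hom C Y Y')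
  : hom C (prod X Y) (prod X' Y') :=
  pairing (comp f (pi1 X Y)) (comp g (pi2 X Y)).

Definition assoc {C : CCC} (X Y Z : obj C) : hom C (prod (prod X Y) Z) (prod X (prod Y Z)) :=
  pairing (comp (pi1 X Y) (pi1 (prod X Y) Z))
          (pairing (comp (pi2 X Y) (pi1 (prod X Y) Z)) (pi2 (prod X Y) Z)).

Record StrongPointed (C : CCC) : Type := {
  Dob : obj C -> obj C;
  Dmap : forall {X Y}, hom C X Y -> hom C (Dob X) (Dob Y);
  Dmap_id : forall X, Dmap (idm X) = idm (Dob X);
  Dmap_comp : forall X Y Z (f : hom C X Y) (g : hom C Y Z),
      Dmap (comp g f) = comp (Dmap g) (Dmap f);
  st : forall X Y, hom C (prod X (Dob Y)) (Dob (prod X Y));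
  st_natural : forall X Y X' Y' (f : hom C X X') (g : hom C Y Y'),
      comp (st X' Y') (prodmap f (Dmap g)) = comp (Dmap (prodmap f g)) (st X Y);
  st_unit : forall X, comp (Dmap (pi2 one X)) (st one X) = pi2 one (Dob X);
  st_assoc : forall X Y Z,
      comp (Dmap (assoc X Y Z)) (st (prod X Y) Z)
      = comp (st X (prod Y Z)) (comp (prodmap (idm X) (st Y Z)) (assoc X Y (Dob Z)));
  eta : forall X, hom C X (Dob X);
  eta_natural : forall X Y (f : hom C X Y), comp (Dmap f) (eta X) = comp (eta Y) f;
  eta_strong : forall X Y, comp (st X Y) (prodmap (idm X) (eta Y)) = eta (prod X Y)
}.
Arguments Dob {C} _ _.
Arguments Dmap {C} _ {X Y} _.
Arguments st {C} _ X Y.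
Arguments eta {C} _ X.

Section Interp.
Context {C : CCC} (M : StrongPointed C) (b : obj C).

Fixpoint ity (A : ty) : obj C :=
  match A with
  | tyBase => b
  | tyUnit => one
  | tyProd A1 A2 => prod (ity A1) (ity A2)
  | tyArr A1 A2 => expo (ity A1) (ity A2)
  | tyDia A1 => Dob M (ity A1)
  end.

Fixpoint ictx (G : ctx) : obj C :=
  match G with
  | nil => one
  | A :: G0 => prod (ictx G0) (ity A)
  end.

Fixpoint ivar {G A} (x : var G A) : hom C (ictx G) (ity A) :=
  match x in var G A return hom C (ictx G) (ity A) with
  | @Vz G0 A0 => pi2 (ictx G0) (ity A0)
  | @Vs G0 A0 B0 w => comp (ivar w) (pi1 (ictx G0) (ity B0))
  end.

Fixpoint itm {G A} (t : tm G A) : hom C (ictx G) (ity A) :=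
  match t in tm _ A return hom C (ictx G) (ity A) with
  | tvar x => ivar x
  | tunit => bang (ictx G)
  | tpair a c => pairing (itm a) (itm c)
  | @tfst _ A1 A2 a => comp (pi1 (ity A1) (ity A2)) (itm a)
  | @tsnd _ A1 A2 a => comp (pi2 (ity A1) (ity A2)) (itm a)
  | tlam c => curry (itm c)
  | @tapp _ A1 A2 f a => comp (ev (ity A1) (ity A2)) (pairing (itm f) (itm a))
  | @tletmap _ A1 A2 a c =>
      comp (Dmap M (itm c)) (comp (st M (ictx G) (ity A1)) (pairing (idm (ictx G)) (itm a)))
  | @tret _ A1 a => comp (eta M (ity A1)) (itm a)
  end.
End Interp.

From Stdlib Require Import List Setoid Morphisms FunctionalExtensionality ClassicalEpsilon
  PropExtensionality.
Import ListNotations.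

(* Soundness is an induction on derivations of [teq]: the interpretation of [subst s t] is that
   of [t] precomposed with the interpretation of [s], so the beta/eta rules become the universal
   properties of products and exponentials, and the three [letmap] rules become the unit,
   associativity and point laws of the strength.

   Completeness goes through the syntactic model: types as objects and terms in a
   one-variable context modulo [teq] as morphisms form a cartesian closed category, with
   [tyDia] as strong pointed endofunctor ([letmap] gives the action and the strength, [ret] the
   point). There a term [t] in context [G] denotes [t] with its variables read off a tuple of
   type [ctx_ty G]; substituting the tuple of all variables undoes this modulo [teq], so equal
   denotations force provably equal terms. *)

Definition var_cons_ind {A G} (P : forall B, var (A :: G) B -> Prop)
  (Pz : P A Vz) (Ps : forall B (w : var G B), P B (Vs w)) : forall B v, P B v :=
  fun B v =>
  match v as v' in var L B0 return
    (match L as L' return var L' B0 -> Prop with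
     | [] => fun _ => True
     | A0 :: G0 => fun v0 => forall P : forall B, var (A0 :: G0) B -> Prop,
          P A0 Vz -> (forall B (w : var G0 B), P B (Vs w)) -> P B0 v0 end) v'
  with
  | Vz => fun P hz hs => hz
  | Vs w => fun P hz hs => hs _ w
  end P Pz Ps.

Definition var_nil_empty {A} (v : var [] A) : False :=
  match v in var L _ return match L with [] => False | _ => True end with
  | Vz => I | Vs _ => I end.

Definition sub_nil {G} : sub [] G := fun A v => False_rect _ (var_nil_empty v).

Lemma var_fun_ext_cons {A G} {T : ty -> Type} (f g : forall B, var (A :: G) B -> T B) :
  f A Vz = g A Vz -> (forall B w, f B (Vs w) = g B (Vs w)) -> f = g.
Proof.
  intros Hz Hs. apply functional_extensionality_dep; intro B.
  apply functional_extensionality; intro v. revert B v.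
  apply (var_cons_ind (fun B v => f B v = g B v)); auto.
Qed.

Ltac lift_ext IH := rewrite IH; f_equal; apply var_fun_ext_cons; [reflexivity|intros; simpl].

Lemma rename_rename G A (t : tm G A) : forall G' G'' (r : ren G G') (r' : ren G' G''),
  rename r' (rename r t) = rename (fun B x => r' B (r B x)) t.
Proof.
  induction t; intros; simpl; f_equal; auto; [lift_ext IHt | lift_ext IHt2]; reflexivity.
Qed.

Lemma subst_rename G A (t : tm G A) : forall G' G'' (r : ren G G') (s : sub G' G''),
  subst s (rename r t) = subst (fun B x => s B (r B x)) t.
Proof.
  induction t; intros; simpl; f_equal; auto; [lift_ext IHt | lift_ext IHt2]; reflexivity.
Qed.

Lemma rename_subst G A (t : tm G A) : forall G' G'' (s : sub G G') (r : ren G' G''),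
  rename r (subst s t) = subst (fun B x => rename r (s B x)) t.
Proof.
  induction t; intros; simpl; f_equal; auto; [lift_ext IHt | lift_ext IHt2];
    unfold wk; rewrite !rename_rename; reflexivity.
Qed.

Lemma subst_subst G A (t : tm G A) : forall G' G'' (s : sub G G') (s' : sub G' G''),
  subst s' (subst s t) = subst (fun B x => subst s' (s B x)) t.
Proof.
  induction t; intros; simpl; f_equal; auto; [lift_ext IHt | lift_ext IHt2];
    unfold wk; rewrite subst_rename, rename_subst; reflexivity.
Qed.

Lemma subst_ids G A (t : tm G A) : subst ids t = t.
Proof.
  induction t; simpl; f_equal; auto;
    [rewrite <- IHt at 2 | rewrite <- IHt2 at 2]; f_equal; apply var_fun_ext_cons; reflexivity.
Qed.

Lemma rename_as_subst G A (t : tm G A) : forall G' (r : ren G G'),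
  rename r t = subst (fun B x => tvar (r B x)) t.
Proof.
  induction t; intros; simpl; f_equal; auto; [lift_ext IHt | lift_ext IHt2]; reflexivity.
Qed.

Lemma subst_lift_wk {G G' A B} (s : sub G G') (t : tm G A) :
  subst (lift_sub (A := B) s) (wk t) = wk (subst s t).
Proof. unfold wk. rewrite subst_rename, rename_subst. reflexivity. Qed.

Lemma subst_subst1 {G G' A B} (s : sub G G') (t : tm (A :: G) B) (u : tm G A) :
  subst s (subst1 t u) = subst1 (subst (lift_sub s) t) (subst s u).
Proof.
  unfold subst1. rewrite !subst_subst. f_equal. apply var_fun_ext_cons; [reflexivity|].
  intros; simpl. unfold wk. rewrite subst_rename. symmetry; apply subst_ids.
Qed.

Lemma subst_subst1_wk {G G' A B C} (s : sub G G') (u' : tm (B :: G) C) (u : tm (A :: G) B) :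
  subst (lift_sub s) (subst1_wk u' u)
  = subst1_wk (subst (lift_sub s) u') (subst (lift_sub s) u).
Proof.
  unfold subst1_wk. rewrite !subst_subst. f_equal. apply var_fun_ext_cons; [reflexivity|].
  intros; simpl. unfold wk. rewrite subst_rename, rename_as_subst. reflexivity.
Qed.

#[export] Instance teq_equiv G A : Equivalence (@teq G A).
Proof. split; red; intros; eauto using teq. Qed.
#[export] Instance tpair_proper G A B : Proper (teq ==> teq ==> teq) (@tpair G A B).
Proof. repeat red; intros; apply eq_pair; auto. Qed.
#[export] Instance tfst_proper G A B : Proper (teq ==> teq) (@tfst G A B).
Proof. repeat red; intros; apply eq_fst; auto. Qed.
#[export] Instance tsnd_proper G A B : Proper (teq ==> teq) (@tsnd G A B).
Proof. repeat red; intros; apply eq_snd; auto. Qed.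
#[export] Instance tapp_proper G A B : Proper (teq ==> teq ==> teq) (@tapp G A B).
Proof. repeat red; intros; apply eq_app; auto. Qed.
#[export] Instance tret_proper G A : Proper (teq ==> teq) (@tret G A).
Proof. repeat red; intros; apply eq_ret; auto. Qed.
#[export] Instance tlam_proper G A B : Proper (teq ==> teq) (@tlam G A B).
Proof. repeat red; intros; apply eq_lam; auto. Qed.
#[export] Instance tletmap_proper G A B : Proper (teq ==> teq ==> teq) (@tletmap G A B).
Proof. repeat red; intros; apply eq_letmap; auto. Qed.

Lemma teq_subst G A (t u : tm G A) : teq t u ->
  forall G' (s : sub G G'), teq (subst s t) (subst s u).
Proof.
  intro H; induction H; intros; simpl; eauto using teq.
  - rewrite subst_lift_wk. apply eq_arr_eta.
  - rewrite subst_subst1. apply eq_arr_beta.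
  - rewrite subst_subst1_wk. apply eq_letmap_assoc.
  - rewrite subst_subst1. apply eq_letmap_ret.
Qed.

#[export] Instance subst_proper G G' A (s : sub G G') : Proper (teq ==> teq) (@subst G G' A s).
Proof. repeat red; intros; apply teq_subst; auto. Qed.

#[export] Instance wk_proper G A B : Proper (teq ==> teq) (@wk G A B).
Proof. intros t u H. unfold wk. rewrite !rename_as_subst, H. reflexivity. Qed.

Lemma teq_subst_pointwise G A (t : tm G A) : forall G' (s s' : sub G G'),
  (forall B x, teq (s B x) (s' B x)) -> teq (subst s t) (subst s' t).
Proof.
  induction t; intros G' s s' Hs; simpl; auto; try reflexivity;
  repeat match goal with
  | IH : forall _ (_ _ : sub (?A :: ?G) _), _ -> teq _ _ |- _ =>
      rewrite (IH _ (lift_sub s) (lift_sub s')) by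
        (apply var_cons_ind; [reflexivity | intros; simpl; rewrite Hs; reflexivity]);
      clear IH
  | IH : forall _ (_ _ : sub _ _), _ -> teq _ _ |- _ =>
      rewrite (IH _ s s') by auto; clear IH
  end; reflexivity.
Qed.

Lemma teq_subst_single {X G' A} (t : tm [X] A) (s s' : sub [X] G') :
  teq (s X Vz) (s' X Vz) -> teq (subst s t) (subst s' t).
Proof.
  intro H; apply teq_subst_pointwise.
  apply var_cons_ind; auto. intros B w; destruct (var_nil_empty w).
Qed.

Section CCCFacts.
Context {C : CCC}.

Lemma pairing_ext {Z X Y : obj C} (h k : hom C Z (prod X Y)) :
  comp (pi1 X Y) h = comp (pi1 X Y) k -> comp (pi2 X Y) h = comp (pi2 X Y) k -> h = k.
Proof.
  intros H1 H2. rewrite (pairing_unique _ _ _ _ h), (pairing_unique _ _ _ _ k), H1, H2.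
  reflexivity.
Qed.

Lemma comp_pairing {W Z X Y : obj C} (f : hom C Z X) (g : hom C Z Y) (h : hom C W Z) :
  comp (pairing f g) h = pairing (comp f h) (comp g h).
Proof. apply pairing_ext; rewrite comp_assoc, ?pi1_pairing, ?pi2_pairing; reflexivity. Qed.

Lemma pairing_pi {X Y : obj C} : pairing (pi1 X Y) (pi2 X Y) = idm (prod X Y).
Proof. apply pairing_ext; rewrite ?pi1_pairing, ?pi2_pairing, comp_id_r; reflexivity. Qed.

Lemma prodmap_pairing {W X Y X' Y' : obj C} (f : hom C X X') (g : hom C Y Y')
  (h : hom C W X) (k : hom C W Y) :
  comp (prodmap f g) (pairing h k) = pairing (comp f h) (comp g k).
Proof.
  unfold prodmap. rewrite comp_pairing, <- !comp_assoc, pi1_pairing, pi2_pairing. reflexivity.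
Qed.

Lemma assoc_pairing {W X Y Z : obj C} (f : hom C W X) (g : hom C W Y) (h : hom C W Z) :
  comp (assoc X Y Z) (pairing (pairing f g) h) = pairing f (pairing g h).
Proof.
  unfold assoc. rewrite !comp_pairing, <- !comp_assoc, !pi1_pairing, !pi2_pairing.
  reflexivity.
Qed.

Lemma curry_comp {W Z X Y : obj C} (f : hom C (prod Z X) Y) (h : hom C W Z) :
  comp (curry f) h = curry (comp f (prodmap h (idm X))).
Proof.
  rewrite (curry_unique _ _ _ _ (comp (curry f) h)). f_equal.
  rewrite <- (ev_curry _ _ _ _ f) at 2.
  unfold prodmap. rewrite <- !comp_assoc, !comp_pairing, <- comp_assoc, pi1_pairing,
    pi2_pairing, comp_id_l. reflexivity.
Qed.

Lemma ev_pairing_curry {Z X Y : obj C} (f : hom C (prod Z X) Y) (u : hom C Z X) :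
  comp (ev X Y) (pairing (curry f) u) = comp f (pairing (idm Z) u).
Proof.
  rewrite <- (ev_curry _ _ _ _ f) at 2.
  rewrite <- comp_assoc, comp_pairing, <- comp_assoc, pi1_pairing, pi2_pairing, comp_id_r.
  reflexivity.
Qed.

End CCCFacts.

Section StrongPointedFacts.
Context {C : CCC} (M : StrongPointed C).

(* [Dmap M u \o strengthen a] is the interpretation of [letmap x = a in u]. *)
Definition strengthen {G A : obj C} (a : hom C G (Dob M A)) : hom C G (Dob M (prod G A)) :=
  comp (st M G A) (pairing (idm G) a).

Lemma strengthen_comp {G G' A : obj C} (a : hom C G (Dob M A)) (h : hom C G' G) :
  comp (strengthen a) h = comp (Dmap M (prodmap h (idm A))) (strengthen (comp a h)).
Proof.
  unfold strengthen.
  rewrite comp_assoc, <- st_natural, Dmap_id, <- !comp_assoc, prodmap_pairing, comp_pairing.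
  rewrite !comp_id_l, comp_id_r. reflexivity.
Qed.

Lemma strengthen_Dmap {G A B : obj C} (u : hom C A B) (a : hom C G (Dob M A)) :
  strengthen (comp (Dmap M u) a) = comp (Dmap M (prodmap (idm G) u)) (strengthen a).
Proof.
  unfold strengthen. rewrite comp_assoc, <- st_natural, <- comp_assoc, prodmap_pairing.
  rewrite comp_id_l. reflexivity.
Qed.

Lemma Dmap_pi2_st (G A : obj C) : comp (Dmap M (pi2 G A)) (st M G A) = pi2 G (Dob M A).
Proof.
  assert (Epi2 : forall Y, pi2 G Y = comp (pi2 one Y) (prodmap (bang G) (idm Y))).
  { intro Y. unfold prodmap. rewrite pi2_pairing, comp_id_l. reflexivity. }
  rewrite Epi2, Dmap_comp, <- comp_assoc, <- st_natural, comp_assoc, st_unit, Dmap_id, Epi2.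
  reflexivity.
Qed.

Lemma Dmap_pi2_strengthen {G A : obj C} (a : hom C G (Dob M A)) :
  comp (Dmap M (pi2 G A)) (strengthen a) = a.
Proof. unfold strengthen. rewrite comp_assoc, Dmap_pi2_st, pi2_pairing. reflexivity. Qed.

Lemma strengthen_eta {G A : obj C} (a : hom C G A) :
  strengthen (comp (eta M A) a) = comp (eta M (prod G A)) (pairing (idm G) a).
Proof.
  unfold strengthen. rewrite <- eta_strong, <- comp_assoc, prodmap_pairing, !comp_id_l.
  reflexivity.
Qed.

(* The associativity law of [st] at [(G, G, A)], precomposed with the diagonal of [G]. *)
Lemma strengthen_strengthen {G A : obj C} (a : hom C G (Dob M A)) :
  strengthen (strengthen a) = comp (Dmap M (pairing (pi1 G A) (idm (prod G A)))) (strengthen a).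
Proof.
  assert (Ediag : pairing (pi1 G A) (idm (prod G A))
                  = comp (assoc G G A) (prodmap (pairing (idm G) (idm G)) (idm A))).
  { symmetry; apply pairing_ext; unfold prodmap, assoc.
    - rewrite comp_assoc, !pi1_pairing, <- comp_assoc, pi1_pairing, comp_assoc, pi1_pairing,
        comp_id_l. reflexivity.
    - rewrite comp_assoc, !pi2_pairing, comp_pairing, <- comp_assoc, pi1_pairing, pi2_pairing,
        comp_assoc, pi2_pairing, !comp_id_l. apply pairing_pi. }
  assert (Epair : pairing (idm G) (strengthen a)
    = comp (prodmap (idm G) (st M G A))
        (comp (assoc G G (Dob M A)) (comp (prodmap (pairing (idm G) (idm G)) (Dmap M (idm A)))
          (pairing (idm G) a)))).
  { unfold strengthen.
    rewrite prodmap_pairing, Dmap_id, !comp_id_l, comp_id_r, assoc_pairing, prodmap_pairing,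
      comp_id_l. reflexivity. }
  unfold strengthen at 1. rewrite Epair, !comp_assoc.
  rewrite <- (comp_assoc _ _ _ _ _ (assoc G G (Dob M A))), <- st_assoc,
    <- (comp_assoc _ _ _ _ _ (prodmap (pairing (idm G) (idm G)) (Dmap M (idm A)))), st_natural,
    comp_assoc, <- Dmap_comp, <- Ediag, <- comp_assoc.
  reflexivity.
Qed.

Lemma letmap_letmap_sem {G A B D : obj C} (a : hom C G (Dob M A)) (u : hom C (prod G A) B)
  (u' : hom C (prod G B) D) :
  comp (Dmap M u') (strengthen (comp (Dmap M u) (strengthen a)))
  = comp (Dmap M (comp u' (pairing (pi1 G A) u))) (strengthen a).
Proof.
  rewrite strengthen_Dmap, strengthen_strengthen, !comp_assoc, <- !Dmap_comp.
  rewrite <- (comp_assoc _ _ _ _ _ (pairing (pi1 G A) (idm _))), prodmap_pairing, comp_id_l,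
    comp_id_r. reflexivity.
Qed.

End StrongPointedFacts.

(** * Soundness *)

Section Soundness.
Context {C : CCC} (M : StrongPointed C) (b : obj C).
Notation I := (itm M b).
Notation IC := (ictx M b).

Lemma itm_letmap {G A B} (a : tm G (tyDia A)) (c : tm (A :: G) B) :
  I (tletmap a c) = comp (Dmap M (I c)) (strengthen M (I a)).
Proof. reflexivity. Qed.

Fixpoint isub {G' G : ctx} : sub G G' -> hom C (IC G') (IC G) :=
  match G return sub G G' -> hom C (IC G') (IC G) with
  | [] => fun _ => bang _
  | A :: G0 => fun s => pairing (isub (fun B x => s B (Vs x))) (I (s A Vz))
  end.

Lemma ivar_isub G A (x : var G A) : forall G' (s : sub G G'),
  comp (ivar M b x) (isub s) = I (s A x).
Proof.
  induction x; intros; simpl.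
  - apply pi2_pairing.
  - rewrite <- comp_assoc, pi1_pairing. apply IHx.
Qed.

Lemma isub_shift G : forall G' B (r : ren G G'),
  isub (fun A x => tvar (Vs (B := B) (r A x))) = comp (isub (fun A x => tvar (r A x))) (pi1 _ _).
Proof.
  induction G; intros; simpl.
  - symmetry; apply bang_unique.
  - rewrite comp_pairing. f_equal. apply (IHG _ _ (fun A x => r A (Vs x))).
Qed.

Lemma isub_ids G : isub (@ids G) = idm (IC G).
Proof.
  unfold ids; induction G; simpl.
  - symmetry; apply bang_unique.
  - rewrite (isub_shift G G a (fun A x => x)), IHG, comp_id_l. apply pairing_pi.
Qed.

Lemma isub_lift_ren G G' A (r : ren G G') :
  isub (fun B x => tvar (lift_ren (A := A) r B x))
  = prodmap (isub (fun B x => tvar (r B x))) (idm (ity M b A)).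
Proof. unfold prodmap; simpl. rewrite isub_shift, comp_id_l. reflexivity. Qed.

Lemma itm_rename G A (t : tm G A) : forall G' (r : ren G G'),
  I (rename r t) = comp (I t) (isub (fun B x => tvar (r B x))).
Proof.
  induction t; intros; cbn [rename]; rewrite ?itm_letmap; simpl.
  - symmetry; apply (ivar_isub _ _ v _ (fun B x => tvar (r B x))).
  - symmetry; apply bang_unique.
  - rewrite comp_pairing, IHt1, IHt2. reflexivity.
  - rewrite IHt, comp_assoc. reflexivity.
  - rewrite IHt, comp_assoc. reflexivity.
  - rewrite IHt, curry_comp, isub_lift_ren. reflexivity.
  - rewrite IHt1, IHt2, <- comp_assoc, comp_pairing. reflexivity.
  - rewrite <- comp_assoc, strengthen_comp, comp_assoc, <- Dmap_comp, IHt1, IHt2,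
      isub_lift_ren. reflexivity.
  - rewrite IHt, comp_assoc. reflexivity.
Qed.

Lemma itm_wk {G A B} (t : tm G A) : I (wk (B := B) t) = comp (I t) (pi1 _ _).
Proof.
  unfold wk. rewrite itm_rename, (isub_shift _ _ _ (fun A x => x)).
  fold (@ids G). rewrite isub_ids, comp_id_l. reflexivity.
Qed.

Lemma isub_lift G G' A (s : sub G G') :
  isub (lift_sub (A := A) s) = prodmap (isub s) (idm (ity M b A)).
Proof.
  unfold prodmap; simpl. rewrite comp_id_l. f_equal.
  induction G; simpl.
  - symmetry; apply bang_unique.
  - rewrite comp_pairing, itm_wk. f_equal. apply (IHG (fun B x => s B (Vs x))).
Qed.

Lemma itm_subst G A (t : tm G A) : forall G' (s : sub G G'),
  I (subst s t) = comp (I t) (isub s).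
Proof.
  induction t; intros; cbn [subst]; rewrite ?itm_letmap; simpl.
  - symmetry; apply ivar_isub.
  - symmetry; apply bang_unique.
  - rewrite comp_pairing, IHt1, IHt2. reflexivity.
  - rewrite IHt, comp_assoc. reflexivity.
  - rewrite IHt, comp_assoc. reflexivity.
  - rewrite IHt, curry_comp, isub_lift. reflexivity.
  - rewrite IHt1, IHt2, <- comp_assoc, comp_pairing. reflexivity.
  - rewrite <- comp_assoc, strengthen_comp, comp_assoc, <- Dmap_comp, IHt1, IHt2,
      isub_lift. reflexivity.
  - rewrite IHt, comp_assoc. reflexivity.
Qed.

Lemma itm_subst1 {G A B} (t : tm (A :: G) B) (u : tm G A) :
  I (subst1 t u) = comp (I t) (pairing (idm _) (I u)).
Proof. unfold subst1. rewrite itm_subst. simpl. rewrite isub_ids. reflexivity. Qed.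

Lemma itm_subst1_wk {G A B D} (u' : tm (B :: G) D) (u : tm (A :: G) B) :
  I (subst1_wk u' u) = comp (I u') (pairing (pi1 _ _) (I u)).
Proof.
  unfold subst1_wk. rewrite itm_subst. simpl.
  rewrite (isub_shift _ _ _ (fun A x => x)). fold (@ids G). rewrite isub_ids, comp_id_l.
  reflexivity.
Qed.

Theorem soundness G A (t u : tm G A) : teq t u -> I t = I u.
Proof.
  intro H; induction H; try (simpl; congruence).
  - apply bang_unique.
  - apply pairing_unique.
  - apply pi1_pairing.
  - apply pi2_pairing.
  - cbn [itm]. rewrite itm_wk. apply curry_unique.
  - rewrite itm_subst1. apply ev_pairing_curry.
  - rewrite itm_letmap. simpl. symmetry; apply Dmap_pi2_strengthen.
  - rewrite !itm_letmap, itm_subst1_wk. apply letmap_letmap_sem.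
  - rewrite itm_letmap; cbn [itm].
    rewrite itm_subst1, strengthen_eta, comp_assoc, eta_natural, comp_assoc. reflexivity.
Qed.

End Soundness.

(** * The term model *)

(* Morphisms [X -> Y] of the term model: terms [x : X |- t : Y] modulo [teq], each class
   represented by the predicate [teq t]. *)
Definition tmq (X Y : ty) := { P : tm [X] Y -> Prop | exists t, P = teq t }.

Definition tclass {X Y} (t : tm [X] Y) : tmq X Y := exist _ (teq t) (ex_intro _ t eq_refl).

Lemma tmq_ext {X Y} (q q' : tmq X Y) : proj1_sig q = proj1_sig q' -> q = q'.
Proof. destruct q, q'; simpl; intro; subst; f_equal; apply proof_irrelevance. Qed.

Lemma tclass_eq {X Y} (t u : tm [X] Y) : teq t u -> tclass t = tclass u.
Proof.
  intro H; apply tmq_ext; simpl. apply functional_extensionality; intro w.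
  apply propositional_extensionality. rewrite H. reflexivity.
Qed.

Lemma tclass_inj {X Y} (t u : tm [X] Y) : tclass t = tclass u -> teq t u.
Proof.
  intro H. apply (f_equal (@proj1_sig _ _)) in H. simpl in H.
  rewrite H. reflexivity.
Qed.

Definition trep {X Y} (q : tmq X Y) : tm [X] Y :=
  proj1_sig (constructive_indefinite_description _ (proj2_sig q)).

Lemma tclass_trep {X Y} (q : tmq X Y) : tclass (trep q) = q.
Proof.
  apply tmq_ext. unfold trep. destruct (constructive_indefinite_description _ _) as [t e].
  simpl. auto.
Qed.

Lemma tclass_surjective {X Y} (q : tmq X Y) : exists t, q = tclass t.
Proof. exists (trep q). symmetry; apply tclass_trep. Qed.

Lemma trep_tclass {X Y} (t : tm [X] Y) : teq (trep (tclass t)) t.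
Proof. apply tclass_inj, tclass_trep. Qed.

Definition qlift1 {X Y X' Y'} (F : tm [X] Y -> tm [X'] Y') (q : tmq X Y) : tmq X' Y' :=
  tclass (F (trep q)).

Definition qlift2 {X Y X' Y' X'' Y''} (F : tm [X] Y -> tm [X'] Y' -> tm [X''] Y'')
  (q : tmq X Y) (q' : tmq X' Y') : tmq X'' Y'' := tclass (F (trep q) (trep q')).

Lemma qlift1_tclass {X Y X' Y'} (F : tm [X] Y -> tm [X'] Y') (t : tm [X] Y) :
  Proper (teq ==> teq) F -> qlift1 F (tclass t) = tclass (F t).
Proof. intro HF. apply tclass_eq, HF, trep_tclass. Qed.

Lemma qlift2_tclass {X Y X' Y' X'' Y''} (F : tm [X] Y -> tm [X'] Y' -> tm [X''] Y'') t u :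
  Proper (teq ==> teq ==> teq) F -> qlift2 F (tclass t) (tclass u) = tclass (F t u).
Proof. intro HF. apply tclass_eq, HF; apply trep_tclass. Qed.

Definition tvar0 {X} : tm [X] X := tvar Vz.

Definition tm_comp {X Y Z} (g : tm [Y] Z) (f : tm [X] Y) : tm [X] Z := subst (scons f sub_nil) g.

Definition tm_curry {Z X Y} (f : tm [tyProd Z X] Y) : tm [Z] (tyArr X Y) :=
  tlam (subst (scons (tpair (tvar (Vs Vz)) (tvar Vz)) sub_nil) f).

Definition tm_Dmap {X Y} (f : tm [X] Y) : tm [tyDia X] (tyDia Y) :=
  tletmap tvar0 (subst (scons (tvar Vz) sub_nil) f).

Definition tm_st X Y : tm [tyProd X (tyDia Y)] (tyDia (tyProd X Y)) :=
  tletmap (tsnd tvar0) (tpair (tfst (tvar (Vs Vz))) (tvar Vz)).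

#[export] Instance tm_comp_proper X Y Z : Proper (teq ==> teq ==> teq) (@tm_comp X Y Z).
Proof.
  intros g g' Hg f f' Hf. unfold tm_comp. rewrite Hg. apply teq_subst_single. simpl. auto.
Qed.
#[export] Instance tm_curry_proper Z X Y : Proper (teq ==> teq) (@tm_curry Z X Y).
Proof. intros f f' H. unfold tm_curry. rewrite H. reflexivity. Qed.
#[export] Instance tm_Dmap_proper X Y : Proper (teq ==> teq) (@tm_Dmap X Y).
Proof. intros f f' H. unfold tm_Dmap. rewrite H. reflexivity. Qed.

Lemma teq_subst_var0 {X A} (t : tm [X] A) (s : sub [X] [X]) :
  teq (s X Vz) tvar0 -> teq (subst s t) t.
Proof. intro H. rewrite <- (subst_ids _ _ t) at 2. apply teq_subst_single. auto. Qed.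

Definition qid X : tmq X X := tclass tvar0.
Definition qcomp {X Y Z} (g : tmq Y Z) (f : tmq X Y) : tmq X Z := qlift2 tm_comp g f.
Definition qbang X : tmq X tyUnit := tclass tunit.
Definition qpi1 X Y : tmq (tyProd X Y) X := tclass (tfst tvar0).
Definition qpi2 X Y : tmq (tyProd X Y) Y := tclass (tsnd tvar0).
Definition qpairing {Z X Y} (f : tmq Z X) (g : tmq Z Y) : tmq Z (tyProd X Y) := qlift2 tpair f g.
Definition qev X Y : tmq (tyProd (tyArr X Y) X) Y := tclass (tapp (tfst tvar0) (tsnd tvar0)).
Definition qcurry {Z X Y} (f : tmq (tyProd Z X) Y) : tmq Z (tyArr X Y) := qlift1 tm_curry f.
Definition qDmap {X Y} (f : tmq X Y) : tmq (tyDia X) (tyDia Y) := qlift1 tm_Dmap f.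
Definition qst X Y : tmq (tyProd X (tyDia Y)) (tyDia (tyProd X Y)) := tclass (tm_st X Y).
Definition qeta X : tmq X (tyDia X) := tclass (tret tvar0).

Lemma qcomp_tclass {X Y Z} (g : tm [Y] Z) (f : tm [X] Y) :
  qcomp (tclass g) (tclass f) = tclass (tm_comp g f).
Proof. apply qlift2_tclass. exact _. Qed.
Lemma qpairing_tclass {X Y Z} (f : tm [Z] X) (g : tm [Z] Y) :
  qpairing (tclass f) (tclass g) = tclass (tpair f g).
Proof. apply qlift2_tclass. exact _. Qed.
Lemma qcurry_tclass {Z X Y} (f : tm [tyProd Z X] Y) : qcurry (tclass f) = tclass (tm_curry f).
Proof. apply qlift1_tclass. exact _. Qed.
Lemma qDmap_tclass {X Y} (f : tm [X] Y) : qDmap (tclass f) = tclass (tm_Dmap f).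
Proof. apply qlift1_tclass. exact _. Qed.

Ltac tclasses := repeat match goal with
  q : tmq _ _ |- _ => let t := fresh "t" in destruct (tclass_surjective q) as [t ->] end.

Ltac to_terms :=
  unfold prodmap, assoc; simpl; unfold qid, qbang, qpi1, qpi2, qev, qst, qeta;
  repeat rewrite ?qcomp_tclass, ?qpairing_tclass, ?qcurry_tclass, ?qDmap_tclass;
  apply tclass_eq; unfold tm_comp, tm_curry, tm_Dmap, tm_st, tvar0; simpl.

Ltac beta_norm :=
  repeat progress (unfold wk, subst1, subst1_wk, tvar0 in *; simpl;
    rewrite ?eq_fst_beta, ?eq_snd_beta, ?eq_letmap_assoc, ?eq_letmap_ret).

Lemma qcomp_assoc X Y Z W (f : tmq X Y) (g : tmq Y Z) (h : tmq Z W) :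
  qcomp h (qcomp g f) = qcomp (qcomp h g) f.
Proof.
  tclasses; to_terms. rewrite subst_subst. apply teq_subst_single. reflexivity.
Qed.

Lemma qcomp_id_l X Y (f : tmq X Y) : qcomp (qid Y) f = f.
Proof. tclasses; to_terms. reflexivity. Qed.

Lemma qcomp_id_r X Y (f : tmq X Y) : qcomp f (qid X) = f.
Proof. tclasses; to_terms. apply teq_subst_var0. reflexivity. Qed.

Lemma qbang_unique X (f : tmq X tyUnit) : f = qbang X.
Proof. tclasses; to_terms. apply eq_unit_eta. Qed.

Lemma qpi1_pairing Z X Y (f : tmq Z X) (g : tmq Z Y) : qcomp (qpi1 X Y) (qpairing f g) = f.
Proof. tclasses; to_terms. apply eq_fst_beta. Qed.

Lemma qpi2_pairing Z X Y (f : tmq Z X) (g : tmq Z Y) : qcomp (qpi2 X Y) (qpairing f g) = g.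
Proof. tclasses; to_terms. apply eq_snd_beta. Qed.

Lemma qpairing_unique Z X Y (h : tmq Z (tyProd X Y)) :
  h = qpairing (qcomp (qpi1 X Y) h) (qcomp (qpi2 X Y) h).
Proof. tclasses; to_terms. apply eq_prod_eta. Qed.

Lemma qev_curry Z X Y (f : tmq (tyProd Z X) Y) :
  qcomp (qev X Y) (qpairing (qcomp (qcurry f) (qpi1 Z X)) (qpi2 Z X)) = f.
Proof.
  tclasses; to_terms. rewrite eq_fst_beta, eq_snd_beta, eq_arr_beta. unfold subst1.
  rewrite !subst_subst. apply teq_subst_var0. simpl. symmetry; apply eq_prod_eta.
Qed.

Lemma qcurry_unique Z X Y (h : tmq Z (tyArr X Y)) :
  h = qcurry (qcomp (qev X Y) (qpairing (qcomp h (qpi1 Z X)) (qpi2 Z X))).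
Proof.
  tclasses; to_terms. rewrite eq_fst_beta, !eq_snd_beta, subst_subst.
  etransitivity; [apply eq_arr_eta|]. apply eq_lam, eq_app; [|reflexivity].
  unfold wk. rewrite rename_as_subst. apply teq_subst_single. simpl. symmetry; apply eq_fst_beta.
Qed.

Definition term_ccc : CCC := {|
  obj := ty; hom := tmq; idm := qid; comp := @qcomp; comp_assoc := qcomp_assoc;
  comp_id_l := qcomp_id_l; comp_id_r := qcomp_id_r;
  one := tyUnit; bang := qbang; bang_unique := qbang_unique;
  prod := tyProd; pi1 := qpi1; pi2 := qpi2; pairing := @qpairing;
  pi1_pairing := qpi1_pairing; pi2_pairing := qpi2_pairing; pairing_unique := qpairing_unique;
  expo := tyArr; ev := qev; curry := @qcurry; ev_curry := qev_curry;
  curry_unique := qcurry_unique |}.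

Lemma qDmap_id X : qDmap (qid X) = qid (tyDia X).
Proof. to_terms. symmetry. apply eq_letmap_id. Qed.

Lemma qDmap_comp X Y Z (f : tmq X Y) (g : tmq Y Z) : qDmap (qcomp g f) = qcomp (qDmap g) (qDmap f).
Proof.
  tclasses; to_terms. rewrite eq_letmap_assoc. unfold subst1_wk. rewrite !subst_subst.
  apply eq_letmap; [reflexivity|]. apply teq_subst_single. reflexivity.
Qed.

Notation qprodmap := (@prodmap term_ccc).
Notation qassoc := (@assoc term_ccc).

Lemma qst_natural X Y X' Y' (f : tmq X X') (g : tmq Y Y') :
  qcomp (qst X' Y') (qprodmap f (qDmap g)) = qcomp (qDmap (qprodmap f g)) (qst X Y).
Proof.
  tclasses; to_terms. beta_norm.
  repeat rewrite ?subst_subst, ?subst_rename, ?rename_subst.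
  apply eq_letmap; [reflexivity|].
  apply eq_pair; apply teq_subst_single; beta_norm; reflexivity.
Qed.

Lemma qst_unit X : qcomp (qDmap (qpi2 tyUnit X)) (qst tyUnit X) = qpi2 tyUnit (tyDia X).
Proof. to_terms. beta_norm. symmetry; apply eq_letmap_id. Qed.

Lemma qst_assoc X Y Z :
  qcomp (qDmap (qassoc X Y Z)) (qst (tyProd X Y) Z)
  = qcomp (qst X (tyProd Y Z)) (qcomp (qprodmap (qid X) (qst Y Z)) (qassoc X Y (tyDia Z))).
Proof. to_terms. beta_norm. reflexivity. Qed.

Lemma qeta_natural X Y (f : tmq X Y) : qcomp (qDmap f) (qeta X) = qcomp (qeta Y) f.
Proof.
  tclasses; to_terms. beta_norm. apply eq_ret. rewrite !subst_subst. apply teq_subst_var0.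
  reflexivity.
Qed.

Lemma qeta_strong X Y : qcomp (qst X Y) (qprodmap (qid X) (qeta Y)) = qeta (tyProd X Y).
Proof. to_terms. beta_norm. apply eq_ret. symmetry; apply eq_prod_eta. Qed.

Definition term_model : StrongPointed term_ccc := {|
  Dob := (tyDia : obj term_ccc -> obj term_ccc);
  Dmap := @qDmap; Dmap_id := qDmap_id; Dmap_comp := qDmap_comp;
  st := qst; st_natural := qst_natural; st_unit := qst_unit; st_assoc := qst_assoc;
  eta := qeta; eta_natural := qeta_natural; eta_strong := qeta_strong |}.

(** * Completeness *)

Notation ity_tm := (ity term_model tyBase).
Notation ictx_tm := (ictx term_model tyBase).
Notation itm_tm := (itm term_model tyBase).

Lemma ity_term_model A : ity_tm A = A.
Proof. induction A; simpl; congruence. Qed.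

Fixpoint ctx_ty (G : ctx) : ty :=
  match G with [] => tyUnit | A :: G0 => tyProd (ctx_ty G0) A end.

Lemma ictx_term_model G : ictx_tm G = ctx_ty G.
Proof. induction G; simpl; try rewrite ity_term_model; congruence. Qed.

(* [ity_tm A] and [A] are equal but not convertible, so morphisms have to be transported. *)
Definition qcast {X X' Y Y'} (e1 : X = X') (e2 : Y = Y') (q : tmq X Y) : tmq X' Y' :=
  eq_rect Y (fun Y => tmq X' Y) (eq_rect X (fun X => tmq X Y) q X' e1) Y' e2.

Ltac uip := repeat match goal with e : ?a = ?a |- _ =>
  rewrite (proof_irrelevance _ e eq_refl) in *; clear e end.

Lemma qcast_comp {X X' Y Y' Z Z'} (e1 : X = X') (e2 : Y = Y') (e3 : Z = Z')
  (g : tmq Y Z) (f : tmq X Y) :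
  qcast e1 e3 (qcomp g f) = qcomp (qcast e2 e3 g) (qcast e1 e2 f).
Proof. destruct e1, e2, e3; reflexivity. Qed.

Lemma qcast_pairing {X X' Y1 Y1' Y2 Y2'} (e1 : X = X') (ea : Y1 = Y1') (eb : Y2 = Y2')
  (e : tyProd Y1 Y2 = tyProd Y1' Y2') (f : tmq X Y1) (g : tmq X Y2) :
  qcast e1 e (qpairing f g) = qpairing (qcast e1 ea f) (qcast e1 eb g).
Proof. destruct e1, ea, eb; uip; reflexivity. Qed.

Lemma qcast_curry {X X' Y1 Y1' Y2 Y2'} (e1 : X = X') (e1' : tyProd X Y1 = tyProd X' Y1')
  (eb : Y2 = Y2') (e : tyArr Y1 Y2 = tyArr Y1' Y2') (f : tmq (tyProd X Y1) Y2) :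
  qcast e1 e (qcurry f) = qcurry (qcast e1' eb f).
Proof. destruct e1, eb. injection e1'; intros; subst. uip; reflexivity. Qed.

Lemma qcast_Dmap {X X' Y Y'} (e1 : X = X') (e2 : Y = Y') (e1' : tyDia X = tyDia X')
  (e2' : tyDia Y = tyDia Y') (f : tmq X Y) :
  qcast e1' e2' (qDmap f) = qDmap (qcast e1 e2 f).
Proof. destruct e1, e2; uip; reflexivity. Qed.

Lemma qcast_qid {X X'} (e1 e2 : X = X') : qcast e1 e2 (qid X) = qid X'.
Proof. destruct e1; uip; reflexivity. Qed.

Lemma qcast_qbang {X X'} (e1 : X = X') (e2 : tyUnit = tyUnit) : qcast e1 e2 (qbang X) = qbang X'.
Proof. destruct e1; uip; reflexivity. Qed.

Lemma qcast_qpi1 {X X' Y Y'} (e1 : tyProd X Y = tyProd X' Y') (e2 : X = X') :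
  qcast e1 e2 (qpi1 X Y) = qpi1 X' Y'.
Proof. injection e1; intros; subst. uip; reflexivity. Qed.

Lemma qcast_qpi2 {X X' Y Y'} (e1 : tyProd X Y = tyProd X' Y') (e2 : Y = Y') :
  qcast e1 e2 (qpi2 X Y) = qpi2 X' Y'.
Proof. injection e1; intros; subst. uip; reflexivity. Qed.

Lemma qcast_qev {X X' Y Y'} (e1 : tyProd (tyArr X Y) X = tyProd (tyArr X' Y') X')
  (e2 : Y = Y') : qcast e1 e2 (qev X Y) = qev X' Y'.
Proof. injection e1; intros; subst. uip; reflexivity. Qed.

Lemma qcast_qst {X X' Y Y'} (e1 : tyProd X (tyDia Y) = tyProd X' (tyDia Y'))
  (e2 : tyDia (tyProd X Y) = tyDia (tyProd X' Y')) : qcast e1 e2 (qst X Y) = qst X' Y'.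
Proof. injection e1; intros; subst. uip; reflexivity. Qed.

Lemma qcast_qeta {X X'} (e1 : X = X') (e2 : tyDia X = tyDia X') :
  qcast e1 e2 (qeta X) = qeta X'.
Proof. destruct e1; uip; reflexivity. Qed.

(* The interpretation of a context is the type of its tuples; a variable is read off a tuple
   by projections. *)
Fixpoint unpack (G : ctx) : sub G [ctx_ty G] :=
  match G return sub G [ctx_ty G] with
  | [] => sub_nil
  | A :: G0 => scons (tsnd tvar0) (fun B w => tm_comp (unpack G0 B w) (tfst tvar0))
  end.

Lemma ivar_term_model G A (x : var G A) e1 e2 :
  qcast e1 e2 (ivar term_model tyBase x) = tclass (unpack G A x).
Proof.
  induction x; simpl.
  - apply qcast_qpi2.
  - rewrite (qcast_comp _ (ictx_term_model G)), IHx, qcast_qpi1. apply qcomp_tclass.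
Qed.

Lemma unpack_lam G A B (c : tm (A :: G) B) :
  teq (tm_curry (subst (unpack (A :: G)) c)) (subst (unpack G) (tlam c)).
Proof.
  apply eq_lam. rewrite subst_subst. apply teq_subst_pointwise, var_cons_ind; simpl.
  - apply eq_snd_beta.
  - intros. unfold tm_comp, wk. rewrite subst_subst, rename_as_subst.
    apply teq_subst_single, eq_fst_beta.
Qed.

Lemma unpack_letmap G A B (a : tm G (tyDia A)) (c : tm (A :: G) B) :
  teq (tm_comp (tm_Dmap (subst (unpack (A :: G)) c))
         (tm_comp (tm_st (ctx_ty G) A) (tpair tvar0 (subst (unpack G) a))))
      (subst (unpack G) (tletmap a c)).
Proof.
  unfold tm_comp, tm_Dmap, tm_st; simpl. beta_norm. rewrite !subst_subst.
  apply eq_letmap; [apply eq_snd_beta|].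
  apply teq_subst_pointwise, var_cons_ind; simpl; [|intros].
  - apply eq_snd_beta.
  - unfold wk, tm_comp. rewrite subst_subst, (rename_as_subst _ _ (unpack G B0 w)).
    apply teq_subst_single. simpl. rewrite !eq_fst_beta. reflexivity.
Qed.

Lemma itm_term_model G A (t : tm G A) e1 e2 :
  qcast e1 e2 (itm_tm t) = tclass (subst (unpack G) t).
Proof.
  induction t; simpl.
  - apply ivar_term_model.
  - apply qcast_qbang.
  - rewrite (qcast_pairing _ (ity_term_model A) (ity_term_model B)), IHt1, IHt2.
    apply qpairing_tclass.
  - rewrite (qcast_comp _ (ity_term_model (tyProd A B))), IHt; simpl. rewrite qcast_qpi1.
    exact (qcomp_tclass _ _).
  - rewrite (qcast_comp _ (ity_term_model (tyProd A B))), IHt; simpl. rewrite qcast_qpi2.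
    exact (qcomp_tclass _ _).
  - rewrite (qcast_curry _ (ictx_term_model (A :: G)) (ity_term_model B)), IHt,
      (qcurry_tclass (Z := ctx_ty G) (X := A)).
    apply tclass_eq, unpack_lam.
  - rewrite (qcast_comp _ (ity_term_model (tyProd (tyArr A B) A))); simpl.
    rewrite qcast_qev, (qcast_pairing _ (ity_term_model (tyArr A B)) (ity_term_model A)), IHt1,
      IHt2.
    unfold qev. rewrite qpairing_tclass, qcomp_tclass. apply tclass_eq. unfold tm_comp; simpl.
    rewrite eq_fst_beta, eq_snd_beta. reflexivity.
  - rewrite (qcast_comp _ (f_equal tyDia (ictx_term_model (A :: G)))),
      (qcast_Dmap (ictx_term_model (A :: G)) (ity_term_model B)), IHt2,
      (qcast_comp _ (f_equal2 tyProd (ictx_term_model G) (ity_term_model (tyDia A)))); simpl.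
    rewrite qcast_qst, (qcast_pairing _ (ictx_term_model G) (ity_term_model (tyDia A))),
      qcast_qid, IHt1.
    unfold qid, qst. rewrite qpairing_tclass, !qcomp_tclass, qDmap_tclass, qcomp_tclass.
    apply tclass_eq, unpack_letmap.
  - rewrite (qcast_comp _ (ity_term_model A)), qcast_qeta, IHt. exact (qcomp_tclass _ _).
Qed.

Fixpoint pack (G : ctx) : tm G (ctx_ty G) :=
  match G return tm G (ctx_ty G) with
  | [] => tunit
  | A :: G0 => tpair (wk (pack G0)) (tvar Vz)
  end.

Lemma unpack_pack G : forall B (x : var G B),
  teq (subst (scons (pack G) sub_nil) (unpack G B x)) (tvar x).
Proof.
  induction G as [|A G IHG].
  - intros B x. destruct (var_nil_empty x).
  - apply var_cons_ind; simpl.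
    + apply eq_snd_beta.
    + intros B w. unfold tm_comp. rewrite subst_subst.
      transitivity (subst (scons (wk (B := A) (pack G)) sub_nil) (unpack G B w)).
      { apply teq_subst_single. apply eq_fst_beta. }
      transitivity (wk (B := A) (subst (scons (pack G) sub_nil) (unpack G B w))).
      { unfold wk. rewrite rename_subst. apply teq_subst_single. reflexivity. }
      rewrite IHG. reflexivity.
Qed.

Lemma subst_pack_unpack G A (t : tm G A) :
  teq (subst (scons (pack G) sub_nil) (subst (unpack G) t)) t.
Proof.
  rewrite subst_subst. rewrite <- (subst_ids _ _ t) at 2.
  apply teq_subst_pointwise, unpack_pack.
Qed.

Theorem completeness G A (t u : tm G A) :
  (forall (C : CCC) (M : StrongPointed C) (b : obj C), itm M b t = itm M b u) -> teq t u.
Proof.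
  intro H. specialize (H term_ccc term_model tyBase).
  apply (f_equal (qcast (ictx_term_model G) (ity_term_model A))) in H.
  rewrite !itm_term_model in H. apply tclass_inj in H.
  rewrite <- (subst_pack_unpack _ _ t), <- (subst_pack_unpack _ _ u), H. reflexivity.
Qed.

Theorem proposition3p2 :
  forall (G : ctx) (A : ty) (t u : tm G A),
    teq t u <->
    (forall (C : CCC) (M : StrongPointed C) (b : obj C), itm M b t = itm M b u).
Proof.
  intros G A t u; split.
  - intros H C M b. apply soundness, H.
  - apply completeness.
Qed.
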